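(* With $N$, $v$, $e_\ell$ and $e$ as in the context, for every line $\ell$ of $\mathrm{PG}_2(q)$ we have $Ne_\ell=q^2v\,e$.
   Context: $q$ is a prime power, $G=\mathrm{PGL}_3(q)$ acts on the point set $\mathcal{P}$ of $\mathrm{PG}_2(q)$ (the $1$-dimensional subspaces of $\mathrm{GF}(q)^3$); lines are $2$-dimensional subspaces, viewed as sets of points. $V$ is the complex vector space with basis $\{e_{\alpha\beta}:(\alpha,\beta)\in\mathcal{P}^2\}$, and $N$ is the linear operator on $V$ with matrix entries $N_{(\alpha,\beta),(\gamma,\delta)}=|\{g\in G:\alpha^g=\beta,\ \gamma^g=\delta,\ g\text{ fixes no point of }\mathcal{P}\}|$. $v=(q-1)q(q^2-1)/3$. $e_\ell=\sum_{\beta,\beta'\in\ell}e_{\beta\beta'}$ and $e=\sum_{\beta,\beta'\in\mathcal{P},\ \beta\neq\beta'}e_{\beta\beta'}$. *)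

From HB Require Import structures.
From mathcomp Require Import all_boot all_order all_algebra.
Set Implicit Arguments. Unset Strict Implicit. Unset Printing Implicit Defensive.
Import GRing.Theory.
Local Open Scope ring_scope.

Section PG2.
Variable F : finFieldType.

(* vectors of GF(q)^3 are row vectors; matrices act on the right *)
Definition vec := 'rV[F]_3.

Definition pt (v : vec) : {set vec} := [set c *: v | c : F].

Definition Pts : {set {set vec}} := [set pt v | v : vec & v != 0].

Definition span2 (u w : vec) : {set vec} := [set a *: u + b *: w | a : F, b : F].

Definition line (u w : vec) : {set {set vec}} :=
  [set p in Pts | p \subset span2 u w].

Definition Lines : {set {set {set vec}}} :=
  [set L | [exists u : vec, exists w : vec,
            (\rank (col_mx u w) == 2%N) && (L == line u w)]].

Definition img (A : 'M[F]_3) (S : {set vec}) : {set vec} := [set x *m A | x in S].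

(* the permutation of the points induced by A (identity off the points) *)
Definition gmap (A : 'M[F]_3) : {ffun {set vec} -> {set vec}} :=
  [ffun S => if S \in Pts then img A S else S].

(* PGL_3(F), realised (faithfully) as the group of maps of points induced by GL_3(F) *)
Definition PGL3 : {set {ffun {set vec} -> {set vec}}} := [set gmap A | A in unitmx].

Definition fpf (g : {ffun {set vec} -> {set vec}}) : bool :=
  [forall p in Pts, g p != p].

Definition Nmat (a b c d : {set vec}) : nat :=
  #|[set g in PGL3 | [&& g a == b, g c == d & fpf g]]|.

End PG2.

(* v = (q-1) q (q^2-1) / 3  (exact division) *)
Definition vnum (q : nat) : nat := ((q - 1) * q * (q ^ 2 - 1)) %/ 3.

From HB Require Import structures.
From mathcomp Require Import all_boot all_order all_algebra.
From mathcomp Require Import ring zify.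
Set Implicit Arguments. Unset Strict Implicit. Unset Printing Implicit Defensive.
Import GRing.Theory.

(* Let a, b be points and l a line of PG_2(q).  By definition of N,
     \sum_(c, d in l) N_(a,b),(c,d) = \sum_(g fpf, g a = b) #{c in l | g c in l}.
   A fixed-point-free collineation g = <A> comes from a matrix A with no
   eigenvalue in GF(q); such an A leaves no plane invariant, so l and g^-1(l)
   meet in exactly one point and every summand equals 1 (line_fix).  It
   remains to count the fixed-point-free g with g a = b: there are none if
   a = b, and otherwise, after normalising A by a scalar and changing basis,
   they correspond to the matrices without eigenvalue whose first row is e_1.
   Such a matrix is determined by its two last rows w, z; its characteristic
   polynomial is a cubic whose coefficients depend bijectively on z once
   w.2 != 0, giving q^2 (q - 1) R of them, where R = (q^3 - q)/3 is the number
   of monic cubics without roots (card_rootless, obtained by counting the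
   cubics through one, two and three prescribed points).  Since
   v = (q - 1) R, the total is q^2 v [a != b]. *)

Section FiniteCounting.
Variable T : finType.

Lemma sum_indicator (A : {set T}) : \sum_x ((x \in A) : nat) = #|A|.
Proof.
by rewrite -sum1_card [RHS]big_mkcond; apply: eq_bigr => x _; case: (x \in A).
Qed.

Lemma sum_pred_card (P : pred T) : \sum_x (P x : nat) = #|[set x | P x]|.
Proof. by rewrite -sum_indicator; apply: eq_bigr => x _; rewrite inE. Qed.

Lemma card_sep_sum (A : {set T}) (P : pred T) :
  #|[set x in A | P x]| = \sum_(x in A) (P x : nat).
Proof.
rewrite -sum_indicator [RHS]big_mkcond; apply: eq_bigr => x _; rewrite inE.
by case: (x \in A).
Qed.

Lemma sum_eq_indicator (A : {set T}) (y : T) :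
  \sum_(x in A) ((y == x) : nat) = (y \in A).
Proof.
rewrite big_mkcond (bigD1 y) //= eqxx big1 ?addn0 => [|x nx]; first by case: (y \in A).
by rewrite eq_sym (negbTE nx); case: (x \in A).
Qed.

Lemma sum_eq1 (e : T) : \sum_x ((x == e) : nat) = 1.
Proof. by rewrite (bigD1 e) //= eqxx big1 // => x /negbTE ->. Qed.

Lemma sum_const_card (n : nat) : \sum_(x : T) n = #|T| * n.
Proof. by rewrite big_const iter_addn_0 mulnC. Qed.

Lemma sum_distinct_pairs (A : {set T}) :
  \sum_x \sum_y (((x \in A) && (y \in A) && (x != y)) : nat)
   = #|A| * (#|A| - 1).
Proof.
transitivity (\sum_x ((x \in A) : nat) * (#|A| - 1));
  last by rewrite -big_distrl /= sum_indicator.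
apply: eq_bigr => x _; case xA: (x \in A) => /=; last by rewrite big1.
rewrite (cardsD1 x A) xA add1n subSS subn0 mul1n -sum_indicator.
by apply: eq_bigr => y _; rewrite !inE andbC eq_sym.
Qed.

Lemma sum_distinct_triples (A : {set T}) :
  \sum_x \sum_y \sum_z
     (((x \in A) && (y \in A) && (z \in A) && (x != y) && (x != z) && (y != z)) : nat)
   = #|A| * (#|A| - 1) * (#|A| - 2).
Proof.
transitivity (\sum_x ((x \in A) : nat) * ((#|A| - 1) * (#|A| - 2)));
  last by rewrite -big_distrl /= sum_indicator mulnA.
apply: eq_bigr => x _; case xA: (x \in A) => /=.
  have cardA : #|A| = #|A :\ x|.+1 by rewrite (cardsD1 x A) xA.
  rewrite mul1n cardA subSS subn0 -sum_distinct_pairs.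
  apply: eq_bigr => y _; apply: eq_bigr => z _; rewrite !inE ![x == _]eq_sym.
  by case: (y == x); case: (z == x); case: (y \in A); case: (z \in A).
by rewrite big1 // => y _; rewrite big1.
Qed.

Lemma four_distinct (A : {set T}) : 3 < #|A| -> exists x y z w,
  [/\ x \in A, y \in A, z \in A, w \in A &
      [&& x != y, x != z, x != w, y != z, y != w & z != w]].
Proof.
move=> gt3.
have [x xA] : exists x, x \in A by apply/card_gt0P; lia.
have [y yA1] : exists y, y \in A :\ x.
  by apply/card_gt0P; move: gt3; rewrite (cardsD1 x A) xA; lia.
have [z zA2] : exists z, z \in A :\ x :\ y.
  apply/card_gt0P; move: gt3.
  by rewrite (cardsD1 x A) xA (cardsD1 y (A :\ x)) yA1; lia.
have [w] : exists w, w \in A :\ x :\ y :\ z.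
  apply/card_gt0P; move: gt3.
  by rewrite (cardsD1 x A) xA (cardsD1 y (A :\ x)) yA1 (cardsD1 z (A :\ x :\ y)) zA2; lia.
move: yA1 zA2; rewrite !inE => /andP [nyx yA] /and3P [nzy nzx zA] /and4P [nwz nwy nwx wA].
exists x, y, z, w; split=> //.
by rewrite (eq_sym x y) nyx (eq_sym x z) nzx (eq_sym x w) nwx (eq_sym y z) nzy
  (eq_sym y w) nwy (eq_sym z w) nwz.
Qed.

End FiniteCounting.

Section MonicCubics.
Variable F : finFieldType.
Local Open Scope ring_scope.
Local Notation q := #|F|.

(* The triple t = (a, b, c) encodes the monic cubic x^3 - a x^2 - b x - c. *)
Definition cubic (t : F * F * F) (x : F) : F :=
  x ^+ 3 - t.1.1 * x ^+ 2 - t.1.2 * x - t.2.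

Definition cubic_root (t : F * F * F) (x : F) : bool := cubic t x == 0.

Lemma sum_cubics (f : F * F * F -> nat) :
  (\sum_t f t = \sum_a \sum_b \sum_c f (a, b, c))%N.
Proof.
transitivity (\sum_(p : F * F * F) f (p.1, p.2))%N; first by apply: eq_bigr => -[].
rewrite -(pair_big predT predT (fun p c => f (p, c))) /=.
transitivity (\sum_(p : F * F) (fun p => \sum_c f (p, c)) (p.1, p.2))%N;
  first by apply: eq_bigr => -[].
by rewrite -(pair_big predT predT (fun a b => \sum_c f (a, b, c))%N).
Qed.

Lemma cubic_root1 a b c x :
  cubic_root (a, b, c) x = (c == x ^+ 3 - a * x ^+ 2 - b * x).
Proof. by rewrite /cubic_root /cubic /= subr_eq0 eq_sym. Qed.

Lemma cubic_root2 a b c x y : x != y ->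
  cubic_root (a, b, c) x && cubic_root (a, b, c) y =
  (b == x ^+ 2 + x * y + y ^+ 2 - a * (x + y))
  && (c == x ^+ 3 - a * x ^+ 2 - b * x).
Proof.
move=> nxy; rewrite !cubic_root1.
apply/andP/andP => -[/eqP cx /eqP cy]; split; apply/eqP => //; last first.
  by rewrite cy cx; ring.
have : (x - y) * (x ^+ 2 + x * y + y ^+ 2 - a * (x + y) - b) = 0.
  by rewrite -[RHS](subrr c) {1}cx cy; ring.
by move/eqP; rewrite mulf_eq0 subr_eq0 (negbTE nxy) /= subr_eq0 => /eqP.
Qed.

Lemma cubic_root3 a b c x y z : x != y -> x != z -> y != z ->
  [&& cubic_root (a, b, c) x, cubic_root (a, b, c) y & cubic_root (a, b, c) z] =
  [&& a == x + y + z, b == x ^+ 2 + x * y + y ^+ 2 - a * (x + y) &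
      c == x ^+ 3 - a * x ^+ 2 - b * x].
Proof.
move=> nxy nxz nyz.
have -> : [&& cubic_root (a, b, c) x, cubic_root (a, b, c) y & cubic_root (a, b, c) z]
  = (cubic_root (a, b, c) x && cubic_root (a, b, c) y)
    && (cubic_root (a, b, c) x && cubic_root (a, b, c) z).
  by case: (cubic_root _ x); case: (cubic_root _ y).
rewrite (cubic_root2 _ _ _ nxy) (cubic_root2 _ _ _ nxz).
apply/idP/idP.
- case/andP => /andP [/eqP by' /eqP cx] /andP [/eqP bz _].
  rewrite cx by' !eqxx !andbT.
  have : (y - z) * (x + y + z - a) = 0.
    have -> : (y - z) * (x + y + z - a) = (x ^+ 2 + x * y + y ^+ 2 - a * (x + y))
       - (x ^+ 2 + x * z + z ^+ 2 - a * (x + z)) by ring.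
    by rewrite -by' -bz subrr.
  by move/eqP; rewrite mulf_eq0 subr_eq0 (negbTE nyz) /= subr_eq0 eq_sym.
- case/and3P => /eqP -> /eqP -> /eqP ->; rewrite !eqxx /= andbT.
  by apply/eqP; ring.
Qed.

Lemma cubics_with_root x : (\sum_t (cubic_root t x : nat) = q * q)%N.
Proof.
rewrite sum_cubics -sum_const_card; apply: eq_bigr => a _.
rewrite -[RHS]muln1 -sum_const_card; apply: eq_bigr => b _.
rewrite -(sum_eq1 (x ^+ 3 - a * x ^+ 2 - b * x)).
by apply: eq_bigr => c _; rewrite cubic_root1.
Qed.

Lemma cubics_with_two_roots x y :
  (\sum_t ((cubic_root t x && cubic_root t y && (x != y)) : nat) = (x != y) * q)%N.
Proof.
case: (eqVneq x y) => [->|nxy] /=; first by rewrite big1 // => t _; rewrite andbF.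
rewrite mul1n sum_cubics -[RHS]muln1 -sum_const_card; apply: eq_bigr => a _.
pose b0 := x ^+ 2 + x * y + y ^+ 2 - a * (x + y).
rewrite (bigD1 b0) //= [X in (_ + X)%N]big1 ?addn0 => [|b nb].
  rewrite -[RHS](sum_eq1 (x ^+ 3 - a * x ^+ 2 - b0 * x)).
  by apply: eq_bigr => c _; rewrite andbT cubic_root2 // eqxx.
by rewrite big1 // => c _; rewrite andbT cubic_root2 // (negbTE nb).
Qed.

Lemma cubics_with_three_roots x y z :
  (\sum_t (([&& cubic_root t x, cubic_root t y & cubic_root t z]
            && [&& x != y, x != z & y != z]) : nat)
   = [&& x != y, x != z & y != z])%N.
Proof.
have [/= distinct|] := boolP [&& x != y, x != z & y != z]; last first.
  by move=> _; rewrite big1 // => t _; rewrite andbF.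
case/and3P: (distinct) => nxy nxz nyz.
pose a0 := x + y + z; pose b0 := x ^+ 2 + x * y + y ^+ 2 - a0 * (x + y).
rewrite sum_cubics (bigD1 a0) //= [X in (_ + X)%N]big1 ?addn0 => [|a na]; last first.
  by rewrite big1 // => b _; rewrite big1 // => c _; rewrite andbT cubic_root3 // (negbTE na).
rewrite (bigD1 b0) //= [X in (_ + X)%N]big1 ?addn0 => [|b nb]; last first.
  by rewrite big1 // => c _; rewrite andbT cubic_root3 // (negbTE nb) andbF.
rewrite -[RHS](sum_eq1 (x ^+ 3 - a0 * x ^+ 2 - b0 * x)).
by apply: eq_bigr => c _; rewrite andbT cubic_root3 // !eqxx.
Qed.

Definition nroots (t : F * F * F) : nat := #|[set x | cubic_root t x]|.

(* A cubic has at most three roots: four would force two equal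
   quadratic coefficients a = x + y + z = x + y + w. *)
Lemma nroots_le3 t : (nroots t <= 3)%N.
Proof.
rewrite leqNgt; apply/negP => /four_distinct [x [y [z [w [xr yr zr wr]]]]].
case/and5P => nxy nxz nxw nyz /andP [nyw nzw].
move: xr yr zr wr; rewrite !inE; case: t => [[a b] c] xr yr zr wr.
have := cubic_root3 a b c nxy nxz nyz; rewrite xr yr zr => /esym /and3P [/eqP az _ _].
have := cubic_root3 a b c nxy nxw nyw; rewrite xr yr wr => /esym /and3P [/eqP aw _ _].
by move: nzw; rewrite az in aw; move/addrI: aw => ->; rewrite eqxx.
Qed.

Definition rootless (t : F * F * F) : bool := [forall x, ~~ cubic_root t x].

Lemma rootless_nroots t : rootless t = (nroots t == 0)%N.
Proof.
rewrite /nroots cards_eq0; apply/forallP/eqP => [h|h x].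
  by apply/setP => x; rewrite !inE; apply/negbTE/h.
by have /setP/(_ x) := h; rewrite !inE => ->.
Qed.

(* For
   n = nroots t <= 3 we have 6 [n = 0] + 6 n + n(n-1)(n-2) = 6 + 3 n(n-1), and
   the sums over all cubics of n, n(n-1) and n(n-1)(n-2) count the cubics
   vanishing at one, two or three prescribed distinct points. *)
Lemma card_rootless : (3 * #|[set t | rootless t]| = q ^ 3 - q)%N.
Proof.
have s0 : (\sum_t (nroots t == 0) = #|[set t | rootless t]|)%N.
  by rewrite sum_pred_card; apply: eq_card => t; rewrite !inE rootless_nroots.
have s1 : (\sum_t nroots t = q * (q * q))%N.
  rewrite /nroots; under eq_bigr do rewrite -sum_pred_card.
  by rewrite exchange_big /= -sum_const_card; apply: eq_bigr => x _; rewrite cubics_with_root.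
have s2 : (\sum_t (nroots t * (nroots t - 1)) = q * (q * (q - 1)))%N.
  rewrite /nroots; under eq_bigr do rewrite -sum_distinct_pairs.
  rewrite exchange_big /= -cardsT -sum_distinct_pairs big_distrr /=.
  apply: eq_bigr => x _; rewrite exchange_big big_distrr /=; apply: eq_bigr => y _.
  by rewrite !inE /= cardsT mulnC -cubics_with_two_roots; apply: eq_bigr => t _; rewrite !inE.
have s3 : (\sum_t (nroots t * (nroots t - 1) * (nroots t - 2))
           = q * (q - 1) * (q - 2))%N.
  rewrite /nroots; under eq_bigr do rewrite -sum_distinct_triples.
  rewrite -cardsT -sum_distinct_triples exchange_big; apply: eq_bigr => x _.
  rewrite exchange_big; apply: eq_bigr => y _; rewrite exchange_big; apply: eq_bigr => z _.
  rewrite !inE /= -!andbA -cubics_with_three_roots.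
  by apply: eq_bigr => t _; rewrite !inE -!andbA.
have s6 : (\sum_(t : F * F * F) 6 = q * q * q * 6)%N.
  by rewrite sum_const_card !card_prod.
have key : (6 * \sum_t (nroots t == 0) + 6 * \sum_t nroots t
             + \sum_t (nroots t * (nroots t - 1) * (nroots t - 2))
             = \sum_(t : F * F * F) 6 + 3 * \sum_t (nroots t * (nroots t - 1)))%N.
  rewrite !big_distrr -!big_split /=; apply: eq_bigr => t _.
  by have := nroots_le3 t; case: (nroots t) => [|[|[|[|n]]]].
rewrite s0 s1 s2 s3 s6 in key; move: key.
case: q => [|[|k]] key; [lia | lia | ].
have e1 : (k.+2 - 1 = k.+1)%N by lia.
have e2 : (k.+2 - 2 = k)%N by lia.
rewrite e1 e2 in key; nia.
Qed.

End MonicCubics.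

Section MatricesWithoutEigenvalues.
Local Open Scope ring_scope.

Lemma det_mx33 (R : comNzRingType) (A : 'M[R]_3) : \det A =
  A 0 0 * (A 1 1 * A 2 2 - A 1 2 * A 2 1)
  - A 0 1 * (A 1 0 * A 2 2 - A 1 2 * A 2 0)
  + A 0 2 * (A 1 0 * A 2 1 - A 1 1 * A 2 0).
Proof.
have det2 (B : 'M[R]_2) : \det B = B 0 0 * B 1 1 - B 0 1 * B 1 0.
  rewrite (expand_det_row _ 0) !big_ord_recl big_ord0 /cofactor !det_mx11 !mxE /=.
  pose C k l := B (inord k) (inord l).
  have -> : B = \matrix_(i, j) C i j by apply/matrixP => i j; rewrite mxE /C !inord_val.
  by rewrite !mxE /= /bump /=; ring.
rewrite (expand_det_row _ 0) !big_ord_recl big_ord0 /cofactor !det2 !mxE /=.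
pose B k l := A (inord k) (inord l).
have Ae i j : A i j = B i j by rewrite /B !inord_val.
by rewrite !Ae /= /bump /=; ring.
Qed.

Variable F : finFieldType.
Local Notation q := #|F|.
Local Notation ev i := (delta_mx 0 i : 'rV[F]_3).

Definition eigfree (A : 'M[F]_3) : bool := [forall l : F, \det (A - l%:M) != 0].

(* The matrix with rows e_1, w and z: exactly the matrices mapping e_0 to e_1. *)
Definition mx_of_rows (w z : F * F * F) : 'M[F]_3 :=
  \matrix_(i < 3, j < 3) nth 0 (nth [::] [:: [:: 0; 1; 0]; [:: w.1.1; w.1.2; w.2];
                                        [:: z.1.1; z.1.2; z.2]] i) j.

(* The coefficients of the characteristic polynomial of mx_of_rows w z. *)
Definition charcoef (w z : F * F * F) : F * F * F :=
  ((w.1.2 + z.2, w.2 * z.1.2 + w.1.1 - w.1.2 * z.2), w.2 * z.1.1 - w.1.1 * z.2).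

Lemma det_mx_of_rows w z l : \det (mx_of_rows w z - l%:M) = - cubic (charcoef w z) l.
Proof. by rewrite det_mx33 !mxE /= /cubic /charcoef /=; ring. Qed.

Lemma eigfree_mx_of_rows w z : eigfree (mx_of_rows w z) = rootless (charcoef w z).
Proof.
by apply/forallP/forallP => h l; move: (h l); rewrite /cubic_root det_mx_of_rows oppr_eq0.
Qed.

Lemma charcoef_inj (w : F * F * F) : w.2 != 0 -> injective (charcoef w).
Proof.
move=> nw [[z0 z1] z2] [[z0' z1'] z2'] /= [e2 e1 e0].
have ez2 : z2 = z2' by apply: addrI e2.
subst z2'; move/addIr/addIr/(mulfI nw): e1 => ->.
by move/addIr/(mulfI nw): e0 => ->.
Qed.

Lemma charcoef_root (w z : F * F * F) : w.2 = 0 -> rootless (charcoef w z) = false.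
Proof.
move=> w2; apply/negbTE/forallPn; exists z.2.
by rewrite negbK /cubic_root /cubic /charcoef /= w2; apply/eqP; ring.
Qed.

Lemma sum_rootless_charcoef (w : F * F * F) :
  (\sum_z (rootless (charcoef w z) : nat)
   = (w.2 != 0%R) * #|[set t : F * F * F | rootless t]|)%N.
Proof.
have [w2|nw] /= := eqVneq w.2 0.
  by rewrite mul0n big1 // => z _; rewrite charcoef_root.
by rewrite mul1n -sum_pred_card [RHS](reindex_inj (charcoef_inj nw)).
Qed.

Lemma mx_of_rows_inj : injective (fun p => mx_of_rows p.1 p.2).
Proof.
move=> [[[w0 w1] w2] [[z0 z1] z2]] [[[w0' w1'] w2'] [[z0' z1'] z2']] /= e.
have E i j : mx_of_rows (w0, w1, w2) (z0, z1, z2) i j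
           = mx_of_rows (w0', w1', w2') (z0', z1', z2') i j by rewrite e.
move: (E 1 0) (E 1 1) (E 1 2) (E 2 0) (E 2 1) (E 2 2); rewrite !mxE /=.
by move=> -> -> -> -> -> ->.
Qed.

Lemma mx_of_rowsP (T : 'M[F]_3) :
  reflect (exists w z, T = mx_of_rows w z) (ev 0 *m T == ev 1).
Proof.
apply: (iffP eqP) => [e01|[w [z ->]]]; last first.
  by rewrite -rowE; apply/rowP => j; rewrite !mxE; case: j => [[|[|[|j]]] Hj].
exists (T 1 0, T 1 1, T 1 2), (T 2 0, T 2 1, T 2 2).
have row0 j : T 0 j = ev 1 0 j by rewrite -e01 -rowE mxE.
pose B k l := T (inord k) (inord l).
have Te i j : T i j = B i j by rewrite /B !inord_val.
apply/matrixP => i j; rewrite !mxE; case: i => [[|[|[|i]]] Hi] //=.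
- by rewrite Te /=; have := row0 j; rewrite Te /= mxE; case: j => [[|[|[|j]]] Hj] //= ->.
- by rewrite !Te /=; case: j => [[|[|[|j]]] Hj].
- by rewrite !Te /=; case: j => [[|[|[|j]]] Hj].
Qed.

(* Matrices without eigenvalue sending e_0 to e_1: q^2 (q - 1) choices of the
   second row w (with w.2 != 0) times one per rootless characteristic cubic. *)
Lemma card_eigfree_e0e1 :
  #|[set T : 'M[F]_3 | (ev 0 *m T == ev 1) && eigfree T]|
  = (q * (q * (q - 1)) * #|[set t : F * F * F | rootless t]|)%N.
Proof.
pose M p := mx_of_rows p.1 p.2.
have -> : [set T | (ev 0 *m T == ev 1) && eigfree T] = M @: [set p | eigfree (M p)].
  apply/setP => T; rewrite inE; apply/andP/imsetP => [[/mx_of_rowsP [w [z ->]] fT]|].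
    by exists (w, z); rewrite ?inE.
  case=> p; rewrite inE => fp ->; split=> //; apply/mx_of_rowsP.
  by exists p.1, p.2.
rewrite (card_imset _ mx_of_rows_inj) -sum_pred_card.
rewrite -(pair_big predT predT (fun w z => (eigfree (M (w, z)) : nat))) /=.
under eq_bigr => w _ do under eq_bigr => z _ do rewrite /M eigfree_mx_of_rows.
under eq_bigr => w _ do rewrite sum_rootless_charcoef.
rewrite -big_distrl /= sum_cubics -sum_const_card; congr (_ * _)%N.
apply: eq_bigr => a _; rewrite -sum_const_card; apply: eq_bigr => b _.
by rewrite sum_pred_card (_ : [set x | _] = [set~ 0]) ?cardsC1 ?subn1 //;
  apply/setP => x; rewrite !inE.
Qed.

End MatricesWithoutEigenvalues.

Section ProjectivePlane.
Variable F : finFieldType.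
Local Open Scope ring_scope.
Local Notation vec := 'rV[F]_3.

Lemma ptP (v x : vec) : reflect (exists c, x = c *: v) (x \in pt v).
Proof. by apply: (iffP imsetP) => [[c _ ->]|[c ->]]; exists c. Qed.

Lemma pt_self (v : vec) : v \in pt v.
Proof. by apply/ptP; exists 1; rewrite scale1r. Qed.

Lemma ptZ (c : F) (v : vec) : c != 0 -> pt (c *: v) = pt v.
Proof.
move=> nc; apply/setP => x; apply/ptP/ptP => -[d ->].
  by exists (d * c); rewrite scalerA.
by exists (d / c); rewrite scalerA mulfVK.
Qed.

Lemma pt_eq (u v : vec) : pt u = pt v -> exists c, u = c *: v.
Proof. by move=> e; apply/ptP; rewrite -e pt_self. Qed.

Lemma PtsP (p : {set vec}) : reflect (exists2 v, v != 0 & p = pt v) (p \in Pts F).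
Proof.
apply: (iffP imsetP) => [[v]|[v nv ->]]; first by rewrite inE => nv ->; exists v.
by exists v; rewrite ?inE.
Qed.

Lemma pt_Pts (v : vec) : v != 0 -> pt v \in Pts F.
Proof. by move=> nv; apply/PtsP; exists v. Qed.

Lemma gmap_pt (A : 'M[F]_3) (v : vec) : v != 0 -> gmap A (pt v) = pt (v *m A).
Proof.
move=> nv; rewrite /gmap ffunE pt_Pts //; apply/setP => x; apply/imsetP/ptP.
  by case=> y /ptP [c ->] ->; exists c; rewrite scalemxAl.
by case=> c ->; exists (c *: v); [apply/ptP; exists c | rewrite scalemxAl].
Qed.

Lemma gmapZ (c : F) (A : 'M[F]_3) : c != 0 -> gmap (c *: A) = gmap A.
Proof.
move=> nc; apply/ffunP => S; have [/PtsP [v nv ->]|nS] := boolP (S \in Pts F).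
  by rewrite !gmap_pt // -scalemxAr ptZ.
by rewrite /gmap !ffunE (negbTE nS).
Qed.

Lemma mulmx_unit_neq0 (v : vec) (A : 'M[F]_3) : A \in unitmx -> v != 0 -> v *m A != 0.
Proof.
move=> uA; apply: contra => /eqP vA0.
by have := congr1 (mulmx^~ (invmx A)) vA0; rewrite /= mulmxK // mul0mx => ->.
Qed.

Lemma eigfree_unit (A : 'M[F]_3) : eigfree A -> A \in unitmx.
Proof.
move/forallP/(_ 0); rewrite unitmxE unitfE (_ : 0%:M = 0) ?subr0 //.
by apply/matrixP => i j; rewrite !mxE mul0rn.
Qed.

Lemma eigfreePn (A : 'M[F]_3) :
  reflect (exists2 v : vec, v != 0 & exists l, v *m A = l *: v) (~~ eigfree A).
Proof.
apply: (iffP forallPn) => [[l]|[v nv [l vA]]]; rewrite ?negbK.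
  case/det0P => v nv e; exists v => //; exists l.
  by apply/eqP; rewrite -subr_eq0 -mul_mx_scalar -mulmxBr e.
by exists l; rewrite negbK; apply/det0P; exists v; rewrite // mulmxBr mul_mx_scalar vA subrr.
Qed.

(* A and its transpose have the same characteristic polynomial. *)
Lemma eigfree_tr (A : 'M[F]_3) : eigfree A^T = eigfree A.
Proof.
by apply/forallP/forallP => h l; move: (h l); rewrite -det_tr linearB /= tr_scalar_mx ?trmxK.
Qed.

(* An invertible matrix induces a fixed-point-free collineation exactly when
   it has no eigenvalue: fixed points are eigenvectors. *)
Lemma fpf_gmap (A : 'M[F]_3) : A \in unitmx -> fpf (gmap A) = eigfree A.
Proof.
move=> uA; apply/forallP/idP => [fixfree|fA p].
  apply/negPn/negP => /eigfreePn [v nv [l vA]].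
  have nl : l != 0 by apply: contraNneq (mulmx_unit_neq0 uA nv) => l0; rewrite vA l0 scale0r.
  by have := fixfree (pt v); rewrite pt_Pts //= gmap_pt // vA ptZ // eqxx.
apply/implyP => /PtsP [v nv ->]; rewrite gmap_pt //; apply/negP => /eqP e.
have [c ec] := pt_eq e; suff : ~~ eigfree A by rewrite fA.
by apply/eigfreePn; exists v => //; exists c.
Qed.

Lemma pt_line (u w v : vec) : v != 0 -> (pt v \in line u w) = (v <= col_mx u w)%MS.
Proof.
have span2E x : (x \in span2 u w) = (x <= col_mx u w)%MS.
  apply/imset2P/submxP => [[a b _ _ ->]|[D ->]].
    by exists (row_mx a%:M b%:M); rewrite mul_row_col !mul_scalar_mx.
  exists (lsubmx D 0 0) (rsubmx D 0 0) => //.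
  by rewrite -[D]hsubmxK mul_row_col row_mxKl row_mxKr {1}[lsubmx D]mx11_scalar
    {1}[rsubmx D]mx11_scalar !mul_scalar_mx.
move=> nv; rewrite /line inE pt_Pts //=; apply/subsetP/idP => [h|h x].
  by rewrite -span2E; apply: h; exact: pt_self.
by case/ptP => c ->; rewrite span2E scalemx_sub.
Qed.

Lemma rank_gt0_nz m (S : 'M[F]_(m, 3)) :
  (0 < \rank S)%N -> exists2 s : vec, s != 0 & (s <= S)%MS.
Proof.
rewrite lt0n mxrank_eq0 => nS.
have [i ni] : exists i, row i S != 0.
  apply/existsP; apply: contraR nS; rewrite negb_exists => /forallP h.
  by apply/eqP/row_matrixP => i; rewrite row0; apply/eqP; move: (h i); rewrite negbK.
by exists (row i S) => //; exact: row_sub.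
Qed.

Lemma rank1_proportional m (S : 'M[F]_(m, 3)) (s v : vec) :
  \rank S = 1%N -> s != 0 -> (s <= S)%MS -> (v <= S)%MS -> exists c, v = c *: s.
Proof.
move=> rS ns sS vS; apply/sub_rVP; apply: submx_trans vS _.
have /andP [] : (s == S)%MS by rewrite -(mxrank_leqif_eq sS).2 rank_rV ns rS.
by [].
Qed.

(* A matrix without eigenvalue leaves no plane invariant: the normal vector of
   an invariant plane would be an eigenvector of the transpose. *)
Lemma invariant_plane (U : 'M[F]_(2, 3)) (A : 'M[F]_3) :
  \rank U = 2%N -> (U *m A <= U)%MS -> ~~ eigfree A.
Proof.
move=> rU /submxP [D eD].
have rK : \rank (kermx U^T) = 1%N by rewrite mxrank_ker mxrank_tr rU.
have [n nn nK] := rank_gt0_nz (ltac:(by rewrite rK) : (0 < \rank (kermx U^T))%N).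
have nUT : n *m U^T = 0 by apply/sub_kermxP.
have : (n *m A^T <= kermx U^T)%MS.
  by apply/sub_kermxP; rewrite -mulmxA -trmx_mul eD trmx_mul mulmxA nUT mul0mx.
case/(rank1_proportional rK nn nK) => l el.
by rewrite -eigfree_tr; apply/eigfreePn; exists n => //; exists l.
Qed.

Lemma eigfree_plane_meet (U : 'M[F]_(2, 3)) (A : 'M[F]_3) :
  \rank U = 2%N -> eigfree A -> \rank (U :&: U *m invmx A)%MS = 1%N.
Proof.
move=> rU fA; have uA := eigfree_unit fA; set S := (U :&: U *m invmx A)%MS.
have rUi : \rank (U *m invmx A) = 2%N by rewrite mxrankMfree // row_free_unit unitmx_inv.
have le2 : (\rank S <= 2)%N by apply: leq_trans (mxrankS (capmxSl _ _)) _; rewrite rU.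
have ge1 : (0 < \rank S)%N.
  have := mxrank_sum_cap U (U *m invmx A); have := rank_leq_col (U + U *m invmx A)%MS.
  by rewrite rU rUi -/S; lia.
suff : \rank S != 2%N by lia.
apply/negP => /eqP r2.
have /andP [_ US] : (S == U)%MS by rewrite -(mxrank_leqif_eq (capmxSl _ _)).2 r2 rU.
have /andP [SUi _] : (S == U *m invmx A)%MS.
  by rewrite -(mxrank_leqif_eq (capmxSr _ _)).2 r2 rUi.
have : (U *m A <= U)%MS by have := submxMr A (submx_trans US SUi); rewrite mulmxKV.
by move/(invariant_plane rU); rewrite fA.
Qed.

(* Key geometric fact: a fixed-point-free collineation maps exactly one point
   of a line l back into l, namely the point l meets the preimage of l in. *)
Lemma line_fix (l : {set {set vec}}) (A : 'M[F]_3) :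
  l \in Lines F -> eigfree A -> #|[set c in l | gmap A c \in l]| = 1%N.
Proof.
rewrite inE => /existsP [u /existsP [w /andP [/eqP rU /eqP ->]]] fA.
have uA := eigfree_unit fA.
set U := col_mx u w in rU *; set S := (U :&: U *m invmx A)%MS.
have rS : \rank S = 1%N by apply: eigfree_plane_meet.
have [s ns sS] := rank_gt0_nz (ltac:(by rewrite rS) : (0 < \rank S)%N).
have inS v : v != 0 -> (pt v \in line u w) && (gmap A (pt v) \in line u w) = (v <= S)%MS.
  move=> nv; rewrite gmap_pt // !pt_line ?mulmx_unit_neq0 // sub_capmx.
  by congr (_ && _); apply/idP/idP => [/(submxMr (invmx A))|/(submxMr A)];
    rewrite ?mulmxK ?mulmxKV.
suff -> : [set c in line u w | gmap A c \in line u w] = [set pt s] by rewrite cards1.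
apply/setP => c; rewrite in_set1 inE; apply/idP/eqP => [cl|->]; last by rewrite inS.
have /PtsP [v nv ec] : c \in Pts F by case/andP: cl; rewrite inE => /andP [].
move: cl; rewrite ec inS // => /(rank1_proportional rS ns sS) [k ek].
by rewrite ek ptZ //; apply: contraNneq nv => k0; rewrite ek k0 scale0r.
Qed.

End ProjectivePlane.

Section CountingCollineations.
Variable F : finFieldType.
Local Open Scope ring_scope.
Local Notation vec := 'rV[F]_3.
Local Notation ev i := (delta_mx 0 i : 'rV[F]_3).

Lemma all_eigen_scalar (M : 'M[F]_3) :
  (forall v : vec, exists c, v *m M = c *: v) -> M = (M 0 0)%:M.
Proof.
move=> eig.
have off i j : i != j -> M i j = 0.
  move=> nij; have [c e] := eig (ev i).
  move: (congr1 (fun r : vec => r 0 j) e); rewrite -rowE !mxE /= => ->.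
  by rewrite eq_sym (negbTE nij) mulr0.
have diag i j : M i i = M j j.
  have [->//|nij] := eqVneq i j.
  have [c e] := eig (ev i + ev j).
  have := congr1 (fun r : vec => r 0 i) e; have := congr1 (fun r : vec => r 0 j) e.
  rewrite /= mulmxDl -!rowE !mxE /= !eqxx (off j i) 1?eq_sym // (off i j) //.
  by rewrite (negbTE nij) addr0 add0r addr0 add0r => -> ->.
apply/matrixP => i j; rewrite mxE; have [->|nij] := eqVneq i j.
  by rewrite mulr1n; apply: diag.
by rewrite off // mulr0n.
Qed.

Lemma gmap_inj_at (A B : 'M[F]_3) (x : vec) :
  A \in unitmx -> B \in unitmx -> x *m A != 0 -> x *m A = x *m B ->
  gmap A = gmap B -> A = B.
Proof.
move=> uA uB nxA xAB eAB.
have eig (v : vec) : exists c, v *m (A *m invmx B) = c *: v.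
  case: (eqVneq v 0) => [->|nv]; first by exists 0; rewrite mul0mx scale0r.
  have := congr1 (fun g : {ffun _ -> _} => g (pt v)) eAB; rewrite /= !gmap_pt //.
  by case/pt_eq => c ec; exists c; rewrite mulmxA ec -scalemxAl mulmxK.
set k := (A *m invmx B) 0 0.
have eA : A = k *: B by rewrite -[A](mulmxKV uB) {1}(all_eigen_scalar eig) mul_scalar_mx.
have : x *m A = k *: (x *m A) by rewrite {1}eA -scalemxAr -xAB.
move/eqP; rewrite -subr_eq0 -{1}[x *m A]scale1r -scalerBl scaler_eq0 (negbTE nxA) orbF.
by rewrite subr_eq0 => /eqP k1; rewrite eA -k1 scale1r.
Qed.

(* Normalising the scalar so that x0 is sent to y0 itself identifies the
   fixed-point-free collineations sending <x0> to <y0> with the matrices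
   without eigenvalue sending x0 to y0. *)
Lemma card_fpf_pt (x0 y0 : vec) : x0 != 0 -> y0 != 0 ->
  #|[set g in PGL3 F | (g (pt x0) == pt y0) && fpf g]|
  = #|[set A : 'M[F]_3 | (x0 *m A == y0) && eigfree A]|.
Proof.
move=> nx ny; set SA := [set A : 'M[F]_3 | _].
have -> : [set g in PGL3 F | (g (pt x0) == pt y0) && fpf g] = (@gmap F) @: SA.
  apply/setP => g; rewrite inE; apply/idP/imsetP.
    case/andP => /imsetP [A uA ->] /andP [/eqP xy fg].
    rewrite gmap_pt // in xy; have [c ec] := pt_eq xy.
    have nc : c != 0.
      by apply: contraNneq (mulmx_unit_neq0 uA nx) => c0; rewrite ec c0 scale0r.
    exists (c^-1 *: A); last by rewrite gmapZ // invr_eq0.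
    rewrite inE -scalemxAr ec scalerA mulVf // scale1r eqxx /=.
    by rewrite -fpf_gmap ?unitmxZ ?unitfE ?invr_eq0 // gmapZ ?invr_eq0.
  case=> A; rewrite inE => /andP [/eqP xA fA] ->; have uA := eigfree_unit fA.
  by rewrite gmap_pt // xA eqxx fpf_gmap // fA !andbT; apply/imsetP; exists A.
rewrite card_in_imset // => A B; rewrite !inE => /andP [/eqP xA fA] /andP [/eqP xB fB].
apply: (gmap_inj_at (x := x0)) (eigfree_unit fA) (eigfree_unit fB) _ _;
  by rewrite ?xA ?xB.
Qed.

Lemma eigfree_conj (B A : 'M[F]_3) :
  B \in unitmx -> eigfree (B *m A *m invmx B) = eigfree A.
Proof.
move=> uB; apply: eq_forallb => l.
have -> : B *m A *m invmx B - l%:M = B *m (A - l%:M) *m invmx B.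
  by rewrite mulmxBr mulmxBl mul_mx_scalar -scalemxAl mulmxV // scalemx1.
have nB : \det B != 0 by rewrite -unitfE -unitmxE.
by rewrite !det_mulmx det_inv mulrAC mulfV // mul1r.
Qed.

Lemma card_eigfree_conj (x0 y0 : vec) (B : 'M[F]_3) :
  B \in unitmx -> ev 0 *m B = x0 -> ev 1 *m B = y0 ->
  #|[set A : 'M[F]_3 | (x0 *m A == y0) && eigfree A]|
  = #|[set T : 'M[F]_3 | (ev 0 *m T == ev 1) && eigfree T]|.
Proof.
move=> uB e0B e1B.
have conj_inj : injective (fun A : 'M[F]_3 => B *m A *m invmx B).
  move=> A1 A2 /= /(congr1 (fun M => invmx B *m M *m B)).
  by rewrite /= !mulmxA !mulVmx // !mul1mx !mulmxKV.
rewrite -(card_imset _ conj_inj); apply: eq_card => T; rewrite [in RHS]inE.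
apply/imsetP/idP => [[A]|/andP [/eqP e01 fT]].
  rewrite inE => /andP [/eqP xy fA] ->.
  by rewrite eigfree_conj // fA andbT !mulmxA e0B xy -e1B mulmxK.
exists (invmx B *m T *m B); last by rewrite !mulmxA mulmxV // mul1mx mulmxK.
rewrite inE -e0B !mulmxA mulmxK // e01 e1B eqxx /=.
by rewrite -{2}(invmxK B) eigfree_conj // unitmx_inv.
Qed.

Lemma basis_of_two_points (x0 y0 : vec) : x0 != 0 -> y0 != 0 -> pt x0 != pt y0 ->
  exists B : 'M[F]_3, [/\ B \in unitmx, ev 0 *m B = x0 & ev 1 *m B = y0].
Proof.
move=> nx ny nxy; set U := col_mx x0 y0.
have rcap : \rank (x0 :&: y0)%MS = 0%N.
  apply/eqP; rewrite -leqn0 leqNgt; apply/negP => /rank_gt0_nz [s ns].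
  rewrite sub_capmx => /andP [/sub_rVP [a ea] /sub_rVP [b eb]].
  have na : a != 0 by apply: contraNneq ns => a0; rewrite ea a0 scale0r.
  have nb : b != 0 by apply: contraNneq ns => b0; rewrite eb b0 scale0r.
  by move: nxy; rewrite -(ptZ x0 na) -(ptZ y0 nb) -ea -eb eqxx.
have rU : \rank U = 2%N.
  by rewrite /U -addsmxE; have := mxrank_sum_cap x0 y0; rewrite rcap !rank_rV nx ny addn0.
have [z nz zC] : exists2 z : vec, z != 0 & (z <= U^C)%MS.
  by apply: rank_gt0_nz; rewrite mxrank_compl rU.
have rB : \rank (col_mx U z) = 3%N.
  rewrite -addsmxE; have := mxrank_sum_cap U z.
  have -> : \rank (U :&: z)%MS = 0%N.
    by apply/eqP; rewrite mxrank_eq0 -submx0 -(capmx_compl U) capmxS.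
  by rewrite rU rank_rV nz addn0.
exists (col_mx U z); split; first by rewrite -row_free_unit /row_free rB.
- have -> : (0 : 'I_3) = lshift 1 (lshift 1 (0 : 'I_1)) by apply/val_inj.
  by rewrite -rowE (rowKu _ U z) (rowKu _ x0 y0) row_id.
- have -> : (1 : 'I_3) = lshift 1 (rshift 1 (0 : 'I_1)) by apply/val_inj.
  by rewrite -rowE (rowKu _ U z) (rowKd _ x0 y0) row_id.
Qed.

End CountingCollineations.

Section FixedPointFreeCount.
Variable F : finFieldType.
Local Notation q := #|F|.
Local Notation ffpt := {ffun {set 'rV[F]_3} -> {set 'rV[F]_3}}.

Definition fpf_maps (a b : {set 'rV[F]_3}) : {set ffpt} :=
  [set g in PGL3 F | (g a == b) && fpf g].

(* Summing N over a line counts every fixed-point-free g with g a = b once,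
   since g maps exactly one point of the line into the line (line_fix). *)
Lemma sum_Nmat_line (l : {set {set 'rV[F]_3}}) (a b : {set 'rV[F]_3}) :
  l \in Lines F -> \sum_(c in l) \sum_(d in l) Nmat a b c d = #|fpf_maps a b|.
Proof.
move=> hl; rewrite /Nmat; under eq_bigr do under eq_bigr do rewrite card_sep_sum.
under eq_bigr do rewrite exchange_big.
rewrite exchange_big card_sep_sum; apply: eq_bigr => g /imsetP [A uA eg].
case ga: (g a == b); last by rewrite big1 // => c _; rewrite big1.
case fg: (fpf g); last by rewrite big1 // => c _; rewrite big1 // => d _; rewrite andbF.
have fA : eigfree A by rewrite -fpf_gmap // -eg.
rewrite -[RHS](line_fix hl fA) -eg card_sep_sum; apply: eq_bigr => c _.
by rewrite -sum_eq_indicator; apply: eq_bigr => d _; rewrite andbT.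
Qed.

Lemma fpf_maps_fixed (a : {set 'rV[F]_3}) : a \in Pts F -> fpf_maps a a = set0.
Proof.
move=> ha; apply/setP => g; rewrite !inE; apply/negP => /and3P [_ /eqP ga /forallP].
by move/(_ a); rewrite ha ga eqxx.
Qed.

Lemma card_fpf_maps (a b : {set 'rV[F]_3}) : a \in Pts F -> b \in Pts F -> a != b ->
  #|fpf_maps a b| = q * (q * (q - 1)) * #|[set t : F * F * F | rootless t]|.
Proof.
case/PtsP=> x0 nx -> /PtsP [y0 ny ->] nxy.
have [B [uB e0B e1B]] := basis_of_two_points nx ny nxy.
by rewrite /fpf_maps card_fpf_pt // (card_eigfree_conj uB e0B e1B) card_eigfree_e0e1.
Qed.

End FixedPointFreeCount.

Theorem mainTheorem10 (F : finFieldType) (l : {set {set 'rV[F]_3}}) :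
  l \in Lines F ->
  forall a b : {set 'rV[F]_3}, a \in Pts F -> b \in Pts F ->
    \sum_(c in l) \sum_(d in l) Nmat a b c d
    = (#|F| ^ 2 * vnum #|F|) * (a != b).
Proof.
move=> hl a b ha hb; rewrite sum_Nmat_line //.
have [<-|nab] := eqVneq a b; first by rewrite fpf_maps_fixed // cards0 muln0.
rewrite card_fpf_maps // muln1.
have := card_rootless F; set R := #|_|; set q := #|F| => cardR.
(* v = (q - 1) R because 3 R = q^3 - q = q (q^2 - 1). *)
have -> : vnum q = (q - 1) * R.
  by rewrite /vnum -mulnA mulnBr muln1 -expnS -cardR mulnCA mulKn.
by rewrite expnS expn1; nia.
Qed.
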